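(* Let $\mathbf C$ be an admissible category of lattices and $L$ a convergence $\mathbf C$-object. The map $\epsilon_L:L\to\mathbb P(\mathrm{pt}\,L)$, $\epsilon_L(\ell)=\ell^\bullet$, is a morphism in $\mathbf C^{\mathrm{conv}}$ and is final, i.e. $\lim_{\mathbb P(\mathrm{pt}\,L)}\mathcal F=\epsilon_L(\lim_L\epsilon_L^{-1}(\mathcal F))$ for every filter $\mathcal F$ of subsets of $\mathrm{pt}\,L$.
   Context: A filter on an inf-semilattice $L$ is a non-empty upward-closed subset closed under binary meets ($L$ itself allowed); $\mathbb F L$ is the set of filters. A category of lattices has lattices as objects and morphisms preserving finite suprema and infima; it is admissible if every powerset $\mathbb P(X)$ is an object and there are classes of index sets $\mathcal I,\mathcal J$ such that morphisms $L\to L'$ are exactly monotone maps preserving all existing $I$-indexed infima ($I\in\mathcal I$) and $J$-indexed suprema ($J\in\mathcal J$). A convergence $\mathbf C$-object is $(L,\lim_L)$ with $\lim_L:\mathbb F L\to L$ monotone; morphisms $\varphi:L\to L'$ of $\mathbf C^{\mathrm{conv}}$ are $\mathbf C$-morphisms with $\lim_{L'}\mathcal F\le\varphi(\lim_L\varphi^{-1}(\mathcal F))$ for all $\mathcal F\in\mathbb F L'$. With $\mathbb P(1)=\{\emptyset,\{*\}\}$ and $\lim_{\mathbb P(1)}$ constantly $\{*\}$, $\mathrm{pt}\,L$ is the set of $\mathbf C^{\mathrm{conv}}$-morphisms $L\to\mathbb P(1)$ and $\ell^\bullet=\{\psi\in\mathrm{pt}\,L:\psi(\ell)=\{*\}\}$.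 The powerset $\mathbb P(\mathrm{pt}\,L)$ carries $\lim_{\mathbb P(\mathrm{pt}\,L)}\mathcal F=(\lim_L\{\ell\in L:\ell^\bullet\in\mathcal F\})^\bullet$. *)

From HB Require Import structures.
From mathcomp Require Import all_boot all_order.
From mathcomp Require Import boolp classical_sets.
Set Implicit Arguments.
Unset Strict Implicit.
Unset Printing Implicit Defensive.
Import Order.TTheory.
Local Open Scope classical_set_scope.
Local Open Scope order_scope.

Section OrderNotions.
Context {d : Order.disp_t} {L : tbLatticeType d}.

Definition is_inf (I : Type) (x : I -> L) (m : L) : Prop :=
  (forall i, m <= x i) /\ (forall y, (forall i, y <= x i) -> y <= m).
Definition is_sup (I : Type) (x : I -> L) (m : L) : Prop :=
  (forall i, x i <= m) /\ (forall y, (forall i, x i <= y) -> m <= y).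

Definition is_lfilter (F : set L) : Prop :=
  (exists l, F l) /\
  (forall a b, F a -> a <= b -> F b) /\
  (forall a b, F a -> F b -> F (Order.meet a b)).

(* a convergence structure: lim : F L -> L monotone.  lim is given as a
   total function on subsets; only its values on filters matter. *)
Definition conv_lim (lim : set L -> L) : Prop :=
  forall F G, is_lfilter F -> is_lfilter G -> F `<=` G -> lim F <= lim G.
End OrderNotions.

Section Maps.
Context {d d' : Order.disp_t} {L : tbLatticeType d} {L' : tbLatticeType d'}.

Definition monotone_map (f : L -> L') : Prop :=
  forall x y, x <= y -> f x <= f y.

Definition preserves_infs (II : Type -> Prop) (f : L -> L') : Prop :=
  forall I : Type, II I -> forall (x : I -> L) m, is_inf x m -> is_inf (f \o x) (f m).
Definition preserves_sups (JJ : Type -> Prop) (f : L -> L') : Prop :=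
  forall J : Type, JJ J -> forall (x : J -> L) m, is_sup x m -> is_sup (f \o x) (f m).

Definition preserves_finite (f : L -> L') : Prop :=
  forall n (x : 'I_n -> L) m,
    (is_inf x m -> is_inf (f \o x) (f m)) /\ (is_sup x m -> is_sup (f \o x) (f m)).

Definition Cmor (II JJ : Type -> Prop) (f : L -> L') : Prop :=
  monotone_map f /\ preserves_infs II f /\ preserves_sups JJ f.

Definition conv_mor (II JJ : Type -> Prop) (lim : set L -> L) (lim' : set L' -> L')
    (f : L -> L') : Prop :=
  Cmor II JJ f /\
  forall F : set L', is_lfilter F -> lim' F <= f (lim (f @^-1` F)).
End Maps.

(* An admissible category of lattices: a class of (bounded) lattices
   containing all powersets, whose morphisms are exactly the monotone maps
   preserving existing II-indexed infima and JJ-indexed suprema; being a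
   category of lattices, these maps preserve finite suprema and infima. *)
Record admissible_cat := AdmissibleCat {
  Obj : forall (d : Order.disp_t), tbLatticeType d -> Prop;
  II : Type -> Prop;
  JJ : Type -> Prop;
  obj_powerset : forall X : Type, Obj (set X);
  mor_finite : forall (d d' : Order.disp_t) (L : tbLatticeType d)
      (L' : tbLatticeType d'), Obj L -> Obj L' ->
      forall f : L -> L', Cmor II JJ f -> preserves_finite f
}.

(* P(1) = set unit, {*} = setT, with lim constantly {*} *)
Definition lim1 : set (set unit) -> set unit := fun _ => setT.

Section Points.
Context (C : admissible_cat) {d : Order.disp_t} {L : tbLatticeType d}
  (lim : set L -> L).

Definition is_pt (psi : L -> set unit) : Prop :=
  conv_mor (II C) (JJ C) lim lim1 psi.

Definition pt : Type := {psi : L -> set unit | is_pt psi}.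

Definition bullet (l : L) : set pt := [set psi : pt | proj1_sig psi l = setT].

Definition limP (F : set (set pt)) : set pt :=
  bullet (lim [set l : L | F (bullet l)]).
End Points.

Arguments is_pt C {d L} lim psi.
Arguments pt C {d L} lim.
Arguments bullet C {d L} lim l.
Arguments limP C {d L} lim F.

From HB Require Import structures.
From mathcomp Require Import all_boot all_order.
From mathcomp Require Import boolp classical_sets.
Local Open Scope classical_set_scope.
Local Open Scope order_scope.
Import Order.TTheory.

(* A point psi : L -> P(1) is determined by the l with psi l = {*}, and it
   sends an I-indexed infimum (J-indexed supremum) of L to the intersection
   (union) of the images.  Hence l |-> l^bullet turns such infima into
   intersections and suprema into unions, i.e. into infima and suprema of
   P(pt L); as points also preserve \top and binary meets, l^bullet pulls
   filters back to filters.  Finality holds by the very definition of the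
   convergence on P(pt L). *)

Section Extrema.
Context {d : Order.disp_t} {L : tbLatticeType d} {I : Type} {x : I -> L}.

Lemma is_inf_unique m m' : is_inf x m -> is_inf x m' -> m = m'.
Proof.
move=> [m_lb m_glb] [m'_lb m'_glb].
by apply/le_anti/andP; split; [exact: m'_glb | exact: m_glb].
Qed.

Lemma is_sup_unique m m' : is_sup x m -> is_sup x m' -> m = m'.
Proof.
move=> [m_ub m_lub] [m'_ub m'_lub].
by apply/le_anti/andP; split; [exact: m_lub | exact: m'_lub].
Qed.

End Extrema.

Section SetExtrema.
Context {X I : Type} {x : I -> set X}.

Lemma is_inf_bigcap : is_inf x (\bigcap_i x i).
Proof.
split=> [i|y y_lb]; rewrite subsetEset; first exact: bigcap_inf.
by apply: sub_bigcap => i _; rewrite -subsetEset.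
Qed.

Lemma is_sup_bigcup : is_sup x (\bigcup_i x i).
Proof.
split=> [i|y y_ub]; rewrite subsetEset; first exact: bigcup_sup.
by apply: bigcup_sub => i _; rewrite -subsetEset.
Qed.

Lemma is_inf_setE {m} : is_inf x m -> m = \bigcap_i x i.
Proof. by move/is_inf_unique; apply; exact: is_inf_bigcap. Qed.

Lemma is_sup_setE {m} : is_sup x m -> m = \bigcup_i x i.
Proof. by move/is_sup_unique; apply; exact: is_sup_bigcup. Qed.

End SetExtrema.

Lemma unit_setTE (A : set unit) : (A = setT) = A tt.
Proof. by apply/propext; split=> [->//|Att]; apply/seteqP; split=> // -[]. Qed.

Lemma is_inf_ord0 {d : Order.disp_t} {L : tbLatticeType d} (x : 'I_0 -> L) :
  is_inf x \top.
Proof. by split=> [[]|y _]; rewrite ?lex1. Qed.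

Lemma is_inf_meet2 {d : Order.disp_t} {L : tbLatticeType d} (a b : L) :
  is_inf (fun i : 'I_2 => if i == ord0 then a else b) (a `&` b).
Proof.
split=> [[[|[|//]] ?]|y y_lb]; rewrite ?leIl ?leIr // lexI.
by rewrite (y_lb ord0) (y_lb (@Ordinal 2 1 erefl)).
Qed.

Section Points.
Context (C : admissible_cat) {d : Order.disp_t} {L : tbLatticeType d}
  (lim : set L -> L) (hL : Obj C L).

Local Notation pt := (pt C lim).
Local Notation bullet := (bullet C lim).

Lemma bulletE l : bullet l = [set psi : pt | sval psi l tt].
Proof. by apply/funext => psi; rewrite /bullet /= unit_setTE. Qed.

Lemma pt_Cmor (psi : pt) : Cmor (II C) (JJ C) (sval psi).
Proof. exact: (proj2_sig psi).1. Qed.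

Lemma pt_bigcap_finite (psi : pt) {n} {x : 'I_n -> L} {m} :
  is_inf x m -> sval psi m = \bigcap_i sval psi (x i).
Proof.
have [psi_inf _] := mor_finite hL (obj_powerset C unit) (pt_Cmor psi) x m.
by move/psi_inf/is_inf_setE.
Qed.

Lemma pt_top (psi : pt) : sval psi \top = setT.
Proof.
rewrite (pt_bigcap_finite psi (is_inf_ord0 (fun _ => \top))).
by apply/seteqP; split=> // u _ [].
Qed.

Lemma ptI (psi : pt) a b : sval psi (a `&` b) = sval psi a `&` sval psi b.
Proof.
rewrite (pt_bigcap_finite psi (is_inf_meet2 a b)); apply/seteqP; split=> u.
  move=> psi_u; split; first exact: (psi_u ord0).
  exact: (psi_u (@Ordinal 2 1 erefl)).
by move=> [psi_a psi_b] [[|[|//]] ?].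
Qed.

Lemma bullet_le a b : a <= b -> bullet a `<=` bullet b.
Proof.
move=> ab psi; rewrite !bulletE /=.
have [psi_mono _] := pt_Cmor psi.
by move/subsetPset: (psi_mono _ _ ab); apply.
Qed.

Lemma bullet_top : bullet \top = setT.
Proof. by rewrite bulletE; apply/seteqP; split=> // psi _; rewrite /= pt_top. Qed.

Lemma bulletI a b : bullet (a `&` b) = bullet a `&` bullet b.
Proof. by rewrite !bulletE; apply/seteqP; split=> psi; rewrite /= ptI. Qed.

Lemma bullet_bigcap {I} {x : I -> L} {m} :
    (forall psi : pt, is_inf (sval psi \o x) (sval psi m)) ->
  bullet m = \bigcap_i bullet (x i).
Proof.
move=> psi_inf; apply/funext => psi; apply/propext.
rewrite bulletE /= (is_inf_setE (psi_inf psi)).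
split=> [psi_m i _|psi_x i _]; first by rewrite bulletE; apply: psi_m.
by have := psi_x i Logic.I; rewrite bulletE.
Qed.

Lemma bullet_bigcup {I} {x : I -> L} {m} :
    (forall psi : pt, is_sup (sval psi \o x) (sval psi m)) ->
  bullet m = \bigcup_i bullet (x i).
Proof.
move=> psi_sup; apply/funext => psi; apply/propext.
rewrite bulletE /= (is_sup_setE (psi_sup psi)).
by split=> -[i _ psi_x]; exists i => //; move: psi_x; rewrite bulletE.
Qed.

Lemma bullet_Cmor : Cmor (II C) (JJ C) bullet.
Proof.
split; first by move=> a b /bullet_le; rewrite subsetEset.
split=> I hI x m xm.
- have pt_inf (psi : pt) : is_inf (sval psi \o x) (sval psi m).
    by have [_ [psi_infs _]] := pt_Cmor psi; exact: psi_infs.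
  by rewrite (bullet_bigcap pt_inf); exact: is_inf_bigcap.
- have pt_sup (psi : pt) : is_sup (sval psi \o x) (sval psi m).
    by have [_ [_ psi_sups]] := pt_Cmor psi; exact: psi_sups.
  by rewrite (bullet_bigcup pt_sup); exact: is_sup_bigcup.
Qed.

Lemma preimage_bullet_filter (F : set (set pt)) :
  is_lfilter F -> is_lfilter (bullet @^-1` F).
Proof.
move=> [[A FA] [F_up F_meet]]; split; last split.
- by exists \top; rewrite /preimage /= bullet_top; apply: F_up FA _; rewrite subsetEset.
- by move=> a b Fa ab; apply: F_up Fa _; rewrite subsetEset; apply: bullet_le.
- by move=> a b Fa Fb; rewrite /preimage /= bulletI; apply: F_meet.
Qed.

Lemma limPE (F : set (set pt)) : limP C lim F = bullet (lim (bullet @^-1` F)).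
Proof. by []. Qed.

Lemma conv_lim_limP : conv_lim lim -> conv_lim (limP C lim).
Proof.
move=> lim_mono F G hF hG FG; rewrite !limPE subsetEset; apply: bullet_le.
by apply: lim_mono; [exact: preimage_bullet_filter.. | move=> l; apply: FG].
Qed.

End Points.

Theorem mainTheorem5 (C : admissible_cat) (d : Order.disp_t) (L : tbLatticeType d)
    (lim : set L -> L) (hL : Obj C L) (hlim : conv_lim lim) :
  conv_lim (limP C lim) /\
  conv_mor (II C) (JJ C) lim (limP C lim) (bullet C lim) /\
  (forall F : set (set (pt C lim)), is_lfilter F ->
     limP C lim F = bullet C lim (lim (bullet C lim @^-1` F))).
Proof.
split; first exact: conv_lim_limP.
split; last by move=> F _; rewrite limPE.
split; first exact: bullet_Cmor.
by move=> F _; rewrite limPE.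
Qed.
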